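(* For $i\ge 1$, let $\sigma_i$ be any permutation of the set of $2^i$ consecutive even numbers $$E_i=\{(4^i+2)/3,\ (4^i+8)/3,\ \ldots,\ (4^{i+1}-4)/3\}$$ that contains no 3-term arithmetic progression as a subsequence. Let $\pi_i$ be any permutation of the set of $2^{i-1}$ consecutive odd numbers $$O_i=\{(4^i+2)/6,\ (4^i+14)/6,\ \ldots,\ (4^{i+1}-6)/6\}$$ that contains no 3-term arithmetic progression as a subsequence. Then: (a) the concatenation $\sigma_1\pi_1\sigma_2\pi_2\sigma_3\pi_3\cdots$ is a permutation of the positive integers; (b) whenever an odd number $x$ occurs in this sequence before an even number $y$, we have $2x-y<0$; (c) the sequence contains no 4-term arithmetic progression with odd common difference as a subsequence.
   Context: A finite or infinite sequence contains a $k$-term arithmetic progression with common difference $d\neq0$ as a subsequence if there are positions $i_1<\cdots<i_k$ whose entries satisfy $a_{i_{m+1}}-a_{i_m}=d$ for all $1\le m<k$. The difference $d$ may be positive or negative. Permutations of finite sets of integers avoiding 3-term arithmetic progressions exist for every finite set of consecutive even numbers and every finite set of consecutive odd numbers. *)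

From HB Require Import structures.
From mathcomp Require Import all_boot all_order all_algebra.
Set Implicit Arguments. Unset Strict Implicit. Unset Printing Implicit Defensive.
Import Order.TTheory GRing.Theory Num.Theory.

(* A sequence (given by its entry function [a] on positions, with admissible
   positions [P]) contains a k-term AP with common difference d as a
   subsequence: positions f 0 < ... < f (k-1), all admissible, with
   a (f (m+1)) - a (f m) = d. *)
Definition has_AP (k : nat) (d : int) (a : nat -> int) (P : nat -> Prop) : Prop :=
  exists f : nat -> nat,
    (forall m, (m < k)%N -> P (f m)) /\
    (forall m, (m.+1 < k)%N -> (f m < f m.+1)%N) /\
    (forall m, (m.+1 < k)%N -> (a (f m.+1) - a (f m))%R = d).

Definition AP3_free (s : seq nat) : Prop :=
  forall d : int, d != 0%R ->
    ~ has_AP 3 d (fun i => Posz (nth 0%N s i)) (fun i => (i < size s)%N).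

Definition Eset (i : nat) : seq nat :=
  [seq x <- iota 0 (4 ^ i.+1) |
     ~~ odd x && (4 ^ i + 2 <= 3 * x)%N && (3 * x + 4 <= 4 ^ i.+1)%N].

Definition Oset (i : nat) : seq nat :=
  [seq x <- iota 0 (4 ^ i.+1) |
     odd x && (4 ^ i + 2 <= 6 * x)%N && (6 * x + 6 <= 4 ^ i.+1)%N].

Definition block (sigma pi : nat -> seq nat) (k : nat) : seq nat :=
  if odd k then pi (k./2).+1 else sigma (k./2).+1.

(* Entry at position n (0-based) of the infinite concatenation; correct since
   every block is nonempty (so the first n+1 blocks have length > n). *)
Definition concat_seq (sigma pi : nat -> seq nat) (n : nat) : nat :=
  nth 0%N (flatten [seq block sigma pi k | k <- iota 0 n.+1]) n.

From HB Require Import structures.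
From mathcomp Require Import all_boot all_order all_algebra.
From mathcomp Require Import zify.
Import Order.TTheory GRing.Theory Num.Theory.

Set Implicit Arguments.
Unset Strict Implicit.

(* Write an odd x as t and an even y as 2t.  Both E_i and O_i then consist of
   the numbers whose t satisfies 4^i + 2 <= 6t < 4^(i+1) + 2 (using
   4^(i+1) = 4 mod 12), i.e. whose "level" floor(log_4 (6t - 2)) equals i.
   Hence every positive integer lies in exactly one block, which gives (a).
   An odd x preceding an even y in the sequence comes from an earlier block,
   so y/2 has a larger level than x, whence x < y/2: this is (b).  The terms
   of a 4-term progression with odd difference alternate in parity, so one of
   its two middle terms is an odd x followed by an even y with 2x - y equal to
   the term before x, which is nonnegative; this contradicts (b), giving (c). *)

Section Concatenation.

Variables (T : eqType) (x0 : T) (B : nat -> seq T) (block_idx : T -> nat).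

Lemma nth_cat_mem (s1 s2 : seq T) n : uniq (s1 ++ s2) -> n < size (s1 ++ s2) ->
  (nth x0 (s1 ++ s2) n \in s1) = (n < size s1).
Proof.
rewrite cat_uniq nth_cat => /and3P[_ /hasPn s1'2 _] lt_n.
case: ltnP => [lt_n1 | le1n]; first by rewrite mem_nth.
apply/negbTE/s1'2; rewrite mem_nth // -(ltn_add2l (size s1)) subnKC //.
by rewrite -size_cat.
Qed.

Hypothesis B_uniq : forall k, uniq (B k).
Hypothesis B_neq0 : forall k, B k != [::].
Hypothesis block_idxP : forall k v, v \in B k -> block_idx v = k.

Definition prefix N := flatten [seq B k | k <- iota 0 N].

Definition concat n := nth x0 (prefix n.+1) n.

Lemma prefixD N M : prefix (N + M) = prefix N ++ flatten [seq B k | k <- iota N M].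
Proof. by rewrite /prefix iotaD map_cat flatten_cat. Qed.

Lemma prefixS N : prefix N.+1 = prefix N ++ B N.
Proof. by rewrite -addn1 prefixD /= cats0. Qed.

Lemma size_prefix N : N <= size (prefix N).
Proof.
elim: N => // N IH; rewrite prefixS size_cat -addn1 leq_add //.
by rewrite lt0n size_eq0.
Qed.

Lemma mem_prefix N v : (v \in prefix N) = (v \in B (block_idx v)) && (block_idx v < N).
Proof.
apply/flattenP/andP => [[s /mapP[k]] | [vB ltN]].
  by rewrite mem_iota => /andP[_ ltkN] -> vB; rewrite (block_idxP vB).
by exists (B (block_idx v)); rewrite // map_f // mem_iota.
Qed.

Lemma prefix_uniq N : uniq (prefix N).
Proof.
elim: N => // N IH; rewrite prefixS cat_uniq IH B_uniq andbT /=.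
by apply/hasPn => v vB; rewrite mem_prefix (block_idxP vB) ltnn andbF.
Qed.

Lemma nth_prefix_leq K M n : K <= M -> n < size (prefix K) ->
  nth x0 (prefix M) n = nth x0 (prefix K) n.
Proof. by move=> le_KM lt_nK; rewrite -(subnKC le_KM) prefixD nth_cat lt_nK. Qed.

Lemma concat_prefix N n : n < size (prefix N) -> concat n = nth x0 (prefix N) n.
Proof.
move=> lt_nN; have lt_n : n < size (prefix n.+1) by exact: size_prefix.
rewrite /concat -(@nth_prefix_leq n.+1 (maxn N n.+1)) ?leq_maxr //.
by rewrite (@nth_prefix_leq N) ?leq_maxl.
Qed.

Lemma concat_mem_prefix N n : (concat n \in prefix N) = (n < size (prefix N)).
Proof.
apply/idP/idP => [|lt_nN]; last by rewrite (concat_prefix lt_nN) mem_nth.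
have lt_nM : n < size (prefix (maxn N n.+1)).
  by rewrite (leq_trans _ (size_prefix _)) ?leq_maxr.
rewrite (concat_prefix lt_nM); move: lt_nM (prefix_uniq (maxn N n.+1)).
by rewrite -(subnKC (leq_maxl N n.+1)) prefixD => lt_nM uniqM; rewrite nth_cat_mem.
Qed.

Lemma concat_inj : injective concat.
Proof.
move=> p q; set N := maxn p q; have [lt_p lt_q] : p < size (prefix N.+1) /\ q < size (prefix N.+1).
  by split; rewrite (leq_trans _ (size_prefix _)) // ltnS ?leq_maxl ?leq_maxr.
rewrite (concat_prefix lt_p) (concat_prefix lt_q) => /eqP.
by rewrite nth_uniq ?prefix_uniq // => /eqP.
Qed.

Lemma concat_block n : concat n \in B (block_idx (concat n)).
Proof.
have : concat n \in prefix n.+1 by rewrite concat_mem_prefix size_prefix.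
by rewrite mem_prefix => /andP[].
Qed.

Lemma concat_surj k v : v \in B k -> exists n, concat n = v.
Proof.
move=> vB; have v_pre : v \in prefix k.+1 by rewrite mem_prefix (block_idxP vB) vB /=.
exists (index v (prefix k.+1)).
by rewrite (concat_prefix (N := k.+1)) ?nth_index ?index_mem.
Qed.

Lemma leq_block_idx_concat p q : p <= q -> block_idx (concat p) <= block_idx (concat q).
Proof.
move=> le_pq; set k := block_idx (concat q).
have : concat q \in prefix k.+1 by rewrite mem_prefix concat_block /=.
rewrite concat_mem_prefix => /(leq_ltn_trans le_pq).
by rewrite -concat_mem_prefix mem_prefix => /andP[].
Qed.

End Concatenation.

Definition level t := trunc_log 4 (6 * t - 2).

Lemma exp4S_mod12 i : 4 ^ i.+1 = 4 %[mod 12].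
Proof. by elim: i => // i IH; rewrite expnS -modnMmr IH. Qed.

Lemma levelP i t : 0 < i -> (level t == i) = (4 ^ i + 2 <= 6 * t < 4 ^ i.+1 + 2).
Proof.
move=> i_gt0; apply/eqP/idP => [def_i | bounds]; last first.
  by apply: trunc_log_eq => //; lia.
move: i_gt0; rewrite -def_i /level trunc_log_gt0 /= => t_gt0.
by have := trunc_log_bounds (isT : 1 < 4) (@ltn_trans 3 0 _ isT t_gt0); lia.
Qed.

Lemma level_gt0 t : (0 < level t) = (0 < t).
Proof. by rewrite /level trunc_log_gt0 /=; lia. Qed.

Lemma leq_level s t : s <= t -> level s <= level t.
Proof. by move=> le_st; apply: leq_trunc_log; lia. Qed.

Lemma ltn_level s t : level s < level t -> s < t.
Proof. by apply: contraLR; rewrite -!leqNgt; apply: leq_level. Qed.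

Lemma odd_level_witness i : 0 < i -> exists2 t, odd t & level t = i.
Proof.
case: i => // i _; have := exp4S_mod12 i.
exists ((4 ^ i.+1 + 2) %/ 6); first by lia.
by apply/eqP; rewrite levelP // [4 ^ i.+2]expnS; lia.
Qed.

Lemma mem_Oset i x : 0 < i -> (x \in Oset i) = odd x && (level x == i).
Proof.
case: i => // i _; rewrite levelP // mem_filter mem_iota.
by have := exp4S_mod12 i.+1; lia.
Qed.

Lemma mem_Eset i y : 0 < i -> (y \in Eset i) = ~~ odd y && (level y./2 == i).
Proof.
case: i => // i _; rewrite levelP // mem_filter mem_iota.
by have := exp4S_mod12 i.+1; lia.
Qed.

Definition block_index v := if odd v then (level v).*2.-1 else (level v./2).*2.-2.

Section Blocks.

Variables sigma pi : nat -> seq nat.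
Hypothesis sigma_perm : forall i, 0 < i -> perm_eq (sigma i) (Eset i).
Hypothesis pi_perm : forall i, 0 < i -> perm_eq (pi i) (Oset i).

Lemma mem_block k v : (v \in block sigma pi k) = (0 < v) && (block_index v == k).
Proof.
have := level_gt0 v; have := level_gt0 v./2; have := odd_double_half k.
rewrite /block /block_index; case: ifP => odd_k.
  by rewrite (perm_mem (pi_perm _)) // mem_Oset //; case: ifP; lia.
by rewrite (perm_mem (sigma_perm _)) // mem_Eset //; case: ifP; lia.
Qed.

Lemma block_uniq k : uniq (block sigma pi k).
Proof.
rewrite /block; case: ifP => _.
  by rewrite (perm_uniq (pi_perm _)) // filter_uniq // iota_uniq.
by rewrite (perm_uniq (sigma_perm _)) // filter_uniq // iota_uniq.
Qed.

Lemma block_neq0 k : block sigma pi k != [::].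
Proof.
have [t odd_t level_t] := @odd_level_witness k./2.+1 isT.
have t_in : (if odd k then t else t.*2) \in block sigma pi k.
  rewrite mem_block /block_index; have := odd_double_half k.
  by case: ifP => _; rewrite ?odd_double ?odd_t ?doubleK level_t; lia.
by apply/eqP => block_nil; rewrite block_nil in t_in.
Qed.

Lemma block_indexP k v : v \in block sigma pi k -> block_index v = k.
Proof. by rewrite mem_block => /andP[_ /eqP]. Qed.

Lemma concat_seqE : concat_seq sigma pi = concat 0 (block sigma pi).
Proof. by []. Qed.

Local Notation a := (concat 0 (block sigma pi)).

Lemma concat_seq_gt0 n : 0 < a n.
Proof.
have := concat_block 0 block_uniq block_neq0 block_indexP n.
by rewrite mem_block => /andP[].
Qed.

Lemma concat_seq_inj : injective a.
Proof. exact: (concat_inj (x0 := 0) block_uniq block_neq0 block_indexP). Qed.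

Lemma concat_seq_surj y : 0 < y -> exists n, a n = y.
Proof.
move=> y_gt0; apply: (concat_surj 0 block_neq0 block_indexP (k := block_index y)).
by rewrite mem_block y_gt0 /=.
Qed.

Lemma odd_before_even p q : p < q -> odd (a p) -> ~~ odd (a q) -> 2 * a p < a q.
Proof.
move=> lt_pq odd_ap even_aq.
have := leq_block_idx_concat 0 block_uniq block_neq0 block_indexP (ltnW lt_pq).
have := level_gt0 (a p); have := concat_seq_gt0 p.
rewrite /block_index odd_ap (negbTE even_aq) => ap_gt0 level_gt0_ap le_idx.
have /ltn_level : level (a p) < level (a q)./2 by lia.
by lia.
Qed.

End Blocks.

Lemma odd_diff_parity (x y : nat) (d : int) :
  (Posz y - Posz x)%R = d -> ~~ (2 %| d)%Z -> odd y = ~~ odd x.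
Proof. by lia. Qed.

Lemma no_odd_AP4 (a : nat -> nat) :
  (forall p q, p < q -> odd (a p) -> ~~ odd (a q) -> 2 * a p < a q) ->
  forall d : int, ~~ (2 %| d)%Z -> ~ has_AP 4 d (fun n => Posz (a n)) (fun _ => True).
Proof.
move=> odd_before_even d odd_d [f [_ [f_incr f_step]]].
have d0 := f_step 0 isT; have d1 := f_step 1 isT; have d2 := f_step 2 isT.
have p1 := odd_diff_parity d1 odd_d; have p2 := odd_diff_parity d2 odd_d.
case: (boolP (odd (a (f 1)))) => [odd1 | even1].
  have := odd_before_even _ _ (f_incr 1 isT) odd1; rewrite p1 odd1 => /(_ isT).
  by lia.
have odd2 : odd (a (f 2)) by rewrite p1.
have := odd_before_even _ _ (f_incr 2 isT) odd2; rewrite p2 odd2 => /(_ isT).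
by lia.
Qed.

Theorem mainTheorem6 (sigma pi : nat -> seq nat) :
  (forall i, (0 < i)%N -> perm_eq (sigma i) (Eset i) /\ AP3_free (sigma i)) ->
  (forall i, (0 < i)%N -> perm_eq (pi i) (Oset i) /\ AP3_free (pi i)) ->
  let a := concat_seq sigma pi in
  ((injective a /\ (forall n, (0 < a n)%N) /\
    (forall y, (0 < y)%N -> exists n, a n = y)) /\
   (forall p q, (p < q)%N -> odd (a p) -> ~~ odd (a q) ->
      (2 * Posz (a p) - Posz (a q) < 0)%R) /\
   (forall d : int, ~~ (2 %| d)%Z ->
      ~ has_AP 4 d (fun n => Posz (a n)) (fun _ => True))).
Proof.
move=> sigmaP piP a.
have sigma_perm i (i_gt0 : 0 < i) := (sigmaP i i_gt0).1.
have pi_perm i (i_gt0 : 0 < i) := (piP i i_gt0).1.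
have odd_lt_even := odd_before_even sigma_perm pi_perm.
rewrite /a concat_seqE; split; [split; [|split] | split].
- exact: concat_seq_inj.
- exact: concat_seq_gt0.
- exact: concat_seq_surj.
- by move=> p q lt_pq odd_ap even_aq; have := odd_lt_even p q lt_pq odd_ap even_aq; lia.
- exact: no_odd_AP4.
Qed.
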